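(* Let $G$ be a locally compact group and let $f,g,f_1,\dots,f_n,g_1,\dots,g_n\in C_0(G)$ be non-zero functions such that $f(xy)g(y)=\sum_{i=1}^n f_i(x)g_i(y)$ for all $x,y\in G$. Then $G$ has a compact open subgroup $H$, and there are functions $f'_j\in C_0(G)$ and $g'_j\in C(H)$ ($j=1,\dots,n$) such that $f(xy)=\sum_{j=1}^n f'_j(x)g'_j(y)$ for all $x\in G$, $y\in H$.
   Context: $C_0(G)$ denotes the continuous complex functions on $G$ vanishing at infinity. *)

From HB Require Import structures.
From mathcomp Require Import all_boot all_order all_algebra.
From mathcomp Require Import all_classical all_reals all_analysis.
From mathcomp Require Import complex.
Set Implicit Arguments. Unset Strict Implicit. Unset Printing Implicit Defensive.
Import Order.TTheory GRing.Theory Num.Theory.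
Import numFieldTopology.Exports numFieldNormedType.Exports.
Local Open Scope classical_set_scope.
Local Open Scope ring_scope.

Definition Cplx (R : realType) : numClosedFieldType := R[i].

Definition is_topological_group (G : topologicalType)
    (mul : G -> G -> G) (inv : G -> G) (one : G) : Prop :=
  [/\ (forall x y z, mul x (mul y z) = mul (mul x y) z),
      (forall x, mul one x = x),
      (forall x, mul (inv x) x = one),
      continuous (fun p : G * G => mul p.1 p.2) &
      continuous inv].

Definition is_locally_compact_group (G : topologicalType)
    (mul : G -> G -> G) (inv : G -> G) (one : G) : Prop :=
  [/\ is_topological_group mul inv one,
      hausdorff_space G &
      locally_compact [set: G]].

Definition is_subgroup (G : Type) (mul : G -> G -> G) (inv : G -> G)
    (one : G) (H : set G) : Prop :=
  [/\ H one, (forall x y, H x -> H y -> H (mul x y)) &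
      (forall x, H x -> H (inv x))].

Definition C0 (R : realType) (G : topologicalType) (f : G -> Cplx R) : Prop :=
  continuous f /\
  forall eps : R, 0 < eps ->
    exists K : set G, compact K /\ forall x, ~ K x -> `|f x| < (eps%:C)%C.

(* Fix u0 with g u0 <> 0.  For y in the open neighbourhood V = {y | g (u0 y) <> 0}
   of 1 the identity gives f (x y) = sum_i fs_i (x u0^-1) gs_i (u0 y) / g (u0 y),
   so the right translates f (. y), y in V, span a space E of dimension d <= n.
   A maximal non-singular minor [f (x_l y_k)] yields a basis f (. y_k) of E whose
   coordinates are read off by evaluation at the points x_l.  H is the stabiliser
   of E under right translation: a subgroup containing a neighbourhood of 1, hence
   open and closed.  It is compact because f x0 = sum_k c_k(b) f (x0 b^-1 y_k) for
   b in H, with coordinates c_k(b) bounded uniformly in b, so one of the points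
   x0 b^-1 y_k must stay in a fixed compact set where f is not small.  The
   required decomposition is the coordinate expansion of f (. y) in E, padded
   with zero terms from d up to n. *)

From HB Require Import structures.
From mathcomp Require Import all_boot all_order all_algebra.
From mathcomp Require Import all_classical all_reals all_analysis.
From mathcomp Require Import complex.
Import Order.TTheory GRing.Theory Num.Theory.
Import numFieldTopology.Exports numFieldNormedType.Exports.
Local Open Scope classical_set_scope.
Local Open Scope ring_scope.

Set Implicit Arguments. Unset Strict Implicit. Unset Printing Implicit Defensive.

Section TopologicalGroup.
Variables (G : topologicalType) (mul : G -> G -> G) (inv : G -> G) (one : G).
Hypothesis hG : is_topological_group mul inv one.

Lemma mulgA x y z : mul x (mul y z) = mul (mul x y) z.
Proof. by case: hG. Qed.

Lemma mul1g x : mul one x = x.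
Proof. by case: hG. Qed.

Lemma mulVg x : mul (inv x) x = one.
Proof. by case: hG. Qed.

Lemma mulKg x y : mul (inv x) (mul x y) = y.
Proof. by rewrite mulgA mulVg mul1g. Qed.

Lemma mulgV x : mul x (inv x) = one.
Proof. by rewrite -[LHS](mulKg (inv x)) (mulKg x) mulVg. Qed.

Lemma mulg1 x : mul x one = x.
Proof. by rewrite -(mulVg x) mulgA mulgV mul1g. Qed.

Lemma mulKVg x y : mul x (mul (inv x) y) = y.
Proof. by rewrite mulgA mulgV mul1g. Qed.

Lemma invgK x : inv (inv x) = x.
Proof. by rewrite -[LHS]mulg1 -(mulVg x) mulKg. Qed.

Lemma invg1 : inv one = one.
Proof. by rewrite -[LHS]mul1g mulgV. Qed.

Lemma invMg x y : inv (mul x y) = mul (inv y) (inv x).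
Proof.
have e : mul (mul x y) (mul (inv y) (inv x)) = one by rewrite -mulgA mulKVg mulgV.
by rewrite -[LHS]mulg1 -e mulgA mulVg mul1g.
Qed.

Lemma continuous_mulg (T : topologicalType) (a b : T -> G) t :
  {for t, continuous a} -> {for t, continuous b} ->
  {for t, continuous (fun z => mul (a z) (b z))}.
Proof.
move=> ca cb; have cab : {for t, continuous (fun z => (a z, b z))}.
  exact: cvg_pair.
by case: hG => _ _ _ cM _; exact: continuous_comp cab (cM (a t, b t)).
Qed.

Lemma continuous_mull a : continuous (mul a).
Proof. by move=> x; apply: continuous_mulg => //; exact: cvg_cst. Qed.

Lemma continuous_mulr a : continuous (mul^~ a).
Proof. by move=> x; apply: continuous_mulg => //; exact: cvg_cst. Qed.

Lemma continuous_inv : continuous inv.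
Proof. by case: hG. Qed.

Lemma near_one_translate (P : G -> Prop) a :
  (\forall b \near one, P b) -> \forall z \near a, P (mul (inv a) z).
Proof.
by move=> P1; apply: (@continuous_mull (inv a) a); rewrite mulVg.
Qed.

Lemma subgroup_open (H : set G) : is_subgroup mul inv one H ->
  (\forall b \near one, H b) -> open H.
Proof.
case=> _ HM _ H1; rewrite openE => a Ha.
apply: filterS (near_one_translate a H1) => z Hz.
by rewrite -(mulKVg a z); exact: HM.
Qed.

Lemma subgroup_closed (H : set G) : is_subgroup mul inv one H ->
  (\forall b \near one, H b) -> closed H.
Proof.
case=> _ HM HV H1; rewrite -openC openE => a nHa.
apply: filterS (near_one_translate a H1) => z Hz Hz'; apply: nHa.
by have := HM _ _ Hz' (HV _ Hz); rewrite invMg invgK mulKVg.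
Qed.

End TopologicalGroup.

Arguments continuous_mull {G mul inv one} hG a.
Arguments continuous_mulr {G mul inv one} hG a.
Arguments continuous_inv {G mul inv one} hG.

Lemma open_nonzero (K : numFieldType) : open [set z : K | z != 0].
Proof.
rewrite openE => z /= z0; apply/nbhs_ballP; exists `|z|; first by rewrite /= normr_gt0.
move=> w; rewrite -ball_normE /= => zw.
by apply: contraTneq zw => ->; rewrite subr0 ltxx.
Qed.

Lemma continuous_sum (T : topologicalType) (K : numFieldType) (I : Type)
    (s : seq I) (F : I -> T -> K) :
  (forall i, continuous (F i)) -> continuous (fun t => \sum_(i <- s) F i t).
Proof.
move=> cF; elim: s => [|i s IHs].
  by under eq_fun do rewrite big_nil; exact: cst_continuous.
by under eq_fun do rewrite big_cons; move=> t; exact: (continuousD (cF i t) (IHs t)).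
Qed.

Lemma nonzero_witness (T : Type) (K : zmodType) (f : T -> K) :
  f <> (fun _ => 0) -> exists x, f x != 0.
Proof.
move=> fnz; apply: contrapT => nf; apply: fnz; apply/funext => x.
by apply/eqP/negPn/negP => fx; apply: nf; exists x.
Qed.

Section C0Functions.
Variables (R : realType) (G : topologicalType).

Lemma compact_norm_bounded (A : set (Cplx R)) :
  compact A -> exists M : nat, forall z, A z -> `|z| <= M%:R.
Proof.
rewrite compact_cover => /(_ nat setT (fun k => ball 0 k%:R)) [].
- by move=> k _; exact: ball_open.
- move=> z _; exists (Num.truncn (complex.Re `|z|)).+1 => //=.
  rewrite -ball_normE /= sub0r normrN -(rmorph_nat (real_complex R)).
  by rewrite -(RRe_real (normr_real z)) ltcR truncnS_gt.
move=> D _ AD; exists (\max_(k <- finmap.enum_fset D) k) => z /AD [k kD].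
rewrite -ball_normE /= sub0r normrN => /ltW /le_trans; apply.
by rewrite ler_nat; exact: leq_bigmax_seq.
Qed.

Lemma C0_lt_outside_compact (f : G -> Cplx R) (eps : Cplx R) : C0 f -> 0 < eps ->
  exists K : set G, compact K /\ forall x, ~ K x -> `|f x| < eps.
Proof.
case=> _ f_small eps_gt0.
have /RRe_real epsE := gtr0_real eps_gt0.
have Re_gt0 : 0 < complex.Re eps by rewrite -ltcR epsE.
have [K [cK hK]] := f_small _ Re_gt0.
by exists K; split => // x /hK; rewrite epsE.
Qed.

Lemma C0_bounded (f : G -> Cplx R) : C0 f ->
  exists M : nat, forall x, `|f x| <= M%:R.
Proof.
move=> f_C0.
have [K [cK f_lt1]] := C0_lt_outside_compact f_C0 (ltr01 : 0 < 1 :> Cplx R).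
have [M fK_le] : exists M : nat, forall z, (f @` K) z -> `|z| <= M%:R.
  apply: compact_norm_bounded; apply: continuous_compact => //.
  by apply: continuous_subspaceT; case: f_C0.
exists M.+1 => x; have [Kx|nKx] := pselect (K x).
  by apply: le_trans (fK_le _ (ex_intro2 _ _ x Kx erefl)) _; rewrite ler_nat.
by apply/ltW/(lt_le_trans (f_lt1 _ nKx)); rewrite ler1n.
Qed.

Lemma C0_cst0 : C0 (fun _ : G => 0 : Cplx R).
Proof.
split=> [x|eps eps_gt0]; first exact: cvg_cst.
exists set0; split=> [|x _]; first exact: compact0.
by rewrite normr0 ltcR.
Qed.

Lemma C0_translate (mul : G -> G -> G) (inv : G -> G) (one : G)
    (f : G -> Cplx R) a :
  is_topological_group mul inv one -> C0 f -> C0 (fun x => f (mul x a)).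
Proof.
move=> hG [f_cont f_small]; split=> [x|eps eps_gt0].
  exact: continuous_comp (continuous_mulr hG a x) (f_cont _).
have [K [cK hK]] := f_small eps eps_gt0.
exists ((mul^~ (inv a)) @` K); split.
  apply: continuous_compact => //; apply: continuous_subspaceT.
  exact: continuous_mulr hG (inv a).
move=> x nKx; apply: hK => Kxa; apply: nKx; exists (mul x a) => //.
by rewrite -(mulgA hG) (mulgV hG) (mulg1 hG).
Qed.

End C0Functions.

Lemma det_block_schur (F : fieldType) d (A : 'M[F]_d) (c : 'cV[F]_d) (r : 'rV[F]_d)
    (s : 'M[F]_1) :
  A \in unitmx -> \det (block_mx A c r s) = \det A * \det (s - r *m invmx A *m c).
Proof.
move=> A_unit.
have -> : block_mx A c r s =
    block_mx 1%:M 0 (r *m invmx A) 1%:M *m block_mx A c 0 (s - r *m invmx A *m c).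
  by rewrite mulmx_block !mul1mx !mul0mx ?mulmx0 !addr0 ?add0r mulmxKV // addrC subrK.
by rewrite det_mulmx det_lblock det_ublock !det1 !mul1r.
Qed.

Section FiniteRankKernel.
Variables (F : fieldType) (X Y : Type) (Phi : X -> Y -> F).

Definition minor d (xs : 'I_d -> X) (ys : 'I_d -> Y) : 'M[F]_d :=
  \matrix_(i, j) Phi (xs i) (ys j).

Lemma minor_unitmx_le_rank n (a : 'I_n -> X -> F) (b : 'I_n -> Y -> F) d
    (xs : 'I_d -> X) (ys : 'I_d -> Y) :
  (forall x y, Phi x y = \sum_(i < n) a i x * b i y) ->
  minor xs ys \in unitmx -> (d <= n)%N.
Proof.
move=> Phi_ab.
have -> : minor xs ys = \matrix_(l, i) a i (xs l) *m \matrix_(i, k) b i (ys k).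
  by apply/matrixP => l k; rewrite !mxE Phi_ab; apply: eq_bigr => i _; rewrite !mxE.
by move/mxrank_unit <-; exact: leq_trans (mxrankM_maxl _ _) (rank_leq_col _).
Qed.

Lemma exists_maximal_unitmx_minor n :
  (forall d (xs : 'I_d -> X) (ys : 'I_d -> Y),
     minor xs ys \in unitmx -> (d <= n)%N) ->
  exists d (xs : 'I_d -> X) (ys : 'I_d -> Y), minor xs ys \in unitmx /\
    forall (xs' : 'I_(d + 1) -> X) (ys' : 'I_(d + 1) -> Y),
      minor xs' ys' \notin unitmx.
Proof.
move=> le_n.
pose P d := `[< exists (xs : 'I_d -> X) (ys : 'I_d -> Y), minor xs ys \in unitmx >].
have P0 : exists d, P d.
  exists 0%N; apply/asboolP; exists (ffun0 (card_ord 0)), (ffun0 (card_ord 0)).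
  by rewrite unitmxE det_mx00 unitr1.
have P_le_n d : P d -> (d <= n)%N by move=> /asboolP [xs [ys]]; exact: le_n.
have [d /asboolP [xs [ys A_unit]] d_max] := ex_maxnP P0 P_le_n.
exists d, xs, ys; split=> // xs' ys'; apply/negP => B_unit.
suff /d_max : P (d + 1)%N by rewrite addn1 ltnn.
by apply/asboolP; exists xs', ys'.
Qed.

Lemma maximal_minor_expansion d (xs : 'I_d -> X) (ys : 'I_d -> Y) :
  minor xs ys \in unitmx ->
  (forall (xs' : 'I_(d + 1) -> X) (ys' : 'I_(d + 1) -> Y),
     minor xs' ys' \notin unitmx) ->
  forall x y, Phi x y =
    \sum_(k < d) Phi x (ys k) * \sum_(l < d) invmx (minor xs ys) k l * Phi (xs l) y.
Proof.
move=> A_unit A_max x y.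
(* The bordered minor is singular, so its Schur complement vanishes. *)
pose xs' (i : 'I_(d + 1)) := if fintype.split i is inl l then xs l else x.
pose ys' (j : 'I_(d + 1)) := if fintype.split j is inl k then ys k else y.
have := A_max xs' ys'.
have -> : minor xs' ys' = block_mx (minor xs ys) (\col_l Phi (xs l) y)
                                   (\row_k Phi x (ys k)) (Phi x y)%:M.
  apply/matrixP => i j.
  case: (split_ordP i) => i' ->; case: (split_ordP j) => j' ->;
  rewrite ?block_mxEul ?block_mxEur ?block_mxEdl ?block_mxEdr !mxE /xs' /ys'
    ?(unsplitK (inl _ _)) ?(unsplitK (inr _ _)) //.
  by rewrite !ord1 eqxx mulr1n.
rewrite unitmxE unitfE negbK det_block_schur // det_mx11 mulf_eq0.
have detA : \det (minor xs ys) != 0 by rewrite -unitfE -unitmxE.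
rewrite (negbTE detA) -mulmxA /= !mxE eqxx mulr1n subr_eq0 => /eqP ->.
apply: eq_bigr => k _; rewrite !mxE; congr (_ * _).
by apply: eq_bigr => l _; rewrite !mxE.
Qed.

End FiniteRankKernel.

Section TranslationStabilizer.
Variables (R : realType) (G : topologicalType).
Variables (mul : G -> G -> G) (inv : G -> G) (one : G).
Hypothesis hG : is_topological_group mul inv one.
Variables (f : G -> Cplx R) (d : nat) (xs ys : 'I_d -> G).
Let A := minor (fun x y => f (mul x y)) xs ys.
Hypothesis A_unit : A \in unitmx.

Definition in_span (F : G -> Cplx R) : Prop :=
  exists c : 'I_d -> Cplx R, forall x, F x = \sum_(k < d) c k * f (mul x (ys k)).

Definition coord (k : 'I_d) (F : G -> Cplx R) : Cplx R :=
  \sum_(l < d) invmx A k l * F (xs l).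

Lemma coordE F (c : 'I_d -> Cplx R) :
  (forall x, F x = \sum_(k < d) c k * f (mul x (ys k))) -> forall k, coord k F = c k.
Proof.
move=> Fc k; rewrite /coord.
under eq_bigr do rewrite Fc mulr_sumr.
rewrite exchange_big /= (eq_bigr (fun j => c j * (invmx A *m A) k j)); last first.
  move=> j _; rewrite mxE mulr_sumr; apply: eq_bigr => l _.
  by rewrite /A /minor !mxE mulrCA.
rewrite mulVmx // (bigD1 k) //= mxE eqxx mulr1 big1 ?addr0 // => j /negbTE jk.
by rewrite mxE eq_sym jk mulr0.
Qed.

Lemma in_spanE F : in_span F ->
  forall x, F x = \sum_(k < d) coord k F * f (mul x (ys k)).
Proof. by case=> c Fc x; rewrite Fc; apply: eq_bigr => k _; rewrite (coordE Fc). Qed.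

Lemma in_span_ys k : in_span (fun x => f (mul x (ys k))).
Proof.
exists (fun j => (j == k)%:R) => x.
by rewrite (bigD1 k) //= eqxx mul1r big1 ?addr0 // => j /negbTE ->; rewrite mul0r.
Qed.

Definition right_stable (b : G) : Prop :=
  forall k, in_span (fun x => f (mul x (mul b (ys k)))).

Lemma right_stable_in_span b F : right_stable b -> in_span F ->
  in_span (fun x => F (mul x b)).
Proof.
move=> st_b [c Fc].
exists (fun m => \sum_(j < d) c j * coord m (fun x => f (mul x (mul b (ys j))))) => x.
rewrite Fc; under eq_bigr do rewrite -(mulgA hG) (in_spanE (st_b _)) mulr_sumr.
rewrite exchange_big /=; apply: eq_bigr => m _; rewrite mulr_suml.
by apply: eq_bigr => j _; rewrite mulrA.
Qed.

Lemma right_stable1 : right_stable one.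
Proof. by move=> k; rewrite (mul1g hG); exact: in_span_ys. Qed.

Lemma right_stableM b b' : right_stable b -> right_stable b' -> right_stable (mul b b').
Proof.
move=> st_b st_b' k.
rewrite (_ : (fun x => _) = fun x => f (mul (mul x b) (mul b' (ys k)))).
  exact: right_stable_in_span st_b (st_b' k).
by apply/funext => x; rewrite !(mulgA hG).
Qed.

Definition stabilizer : set G := [set b | right_stable b /\ right_stable (inv b)].

Lemma stabilizer_subgroup : is_subgroup mul inv one stabilizer.
Proof.
split=> [|b b' [st_b st_Vb] [st_b' st_Vb']|b [st_b st_Vb]].
- by split; rewrite ?(invg1 hG); exact: right_stable1.
- by split; rewrite ?(invMg hG); exact: right_stableM.
- by split; rewrite ?(invgK hG).
Qed.

Variable V : set G.
Hypothesis V_open : open V.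
Hypothesis V_ys : forall k, V (ys k).
Hypothesis V_span : forall y, V y -> in_span (fun x => f (mul x y)).

Lemma stabilizer_near_one : \forall b \near one, stabilizer b.
Proof.
have V_near k : \forall z \near ys k, V z by apply: open_nbhs_nbhs.
have V_translates :
    \forall b \near one, forall k, V (mul b (ys k)) /\ V (mul (inv b) (ys k)).
  apply: filter_forall => k.
  have V_right : \forall b \near one, V (mul b (ys k)).
    apply: (continuous_mulr hG (ys k) one).
    by rewrite (mul1g hG); exact: V_near.
  have V_left : \forall b \near one, V (mul (inv b) (ys k)).
    apply: (continuous_mulg (b := fun=> ys k) hG (continuous_inv hG one) (cvg_cst _)).
    by rewrite (invg1 hG) (mul1g hG); exact: V_near.
  by apply: filterS2 V_right V_left => b.
apply: filterS V_translates => b V_b.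
by split=> k; apply: V_span; case: (V_b k).
Qed.

Lemma stabilizer_open : open stabilizer.
Proof. apply: (subgroup_open hG stabilizer_subgroup); exact: stabilizer_near_one. Qed.

Lemma stabilizer_closed : closed stabilizer.
Proof. apply: (subgroup_closed hG stabilizer_subgroup); exact: stabilizer_near_one. Qed.

Hypothesis V_one : V one.

Lemma translate_expansion b : right_stable b ->
  forall x, f (mul x b) = \sum_(k < d) coord k (fun z => f (mul z b)) * f (mul x (ys k)).
Proof.
move=> st_b; apply/in_spanE/right_stable_in_span => //.
rewrite (_ : f = fun x => f (mul x one)); first exact: V_span.
by apply/funext => x; rewrite (mulg1 hG).
Qed.

Lemma norm_coord_le F (M : Cplx R) k : (forall x, `|F x| <= M) ->
  `|coord k F| <= \sum_(l < d) `|invmx A k l| * M.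
Proof.
move=> F_le_M; apply: le_trans (ler_norm_sum _ _ _) _.
by apply: ler_sum => l _; rewrite normrM ler_wpM2l.
Qed.

Hypothesis f_C0 : C0 f.

Lemma continuous_coord_translate k : continuous (fun y => coord k (fun x => f (mul x y))).
Proof.
apply: continuous_sum => l y; apply: continuousM; first exact: cvg_cst.
exact: continuous_comp (continuous_mull hG (xs l) y) (f_C0.1 _).
Qed.

Variable x0 : G.
Hypothesis fx0 : f x0 != 0.

Lemma stabilizer_compact : compact stabilizer.
Proof.
have [M f_le_M] := C0_bounded f_C0.
pose C := \sum_(k < d) \sum_(l < d) `|invmx A k l| * M%:R.
have C1_gt0 : 0 < C + 1.
  by apply/ltr_wpDl/ltr01/sumr_ge0 => k _; apply: sumr_ge0 => l _; rewrite mulr_ge0.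
pose eps := `|f x0| / (C + 1).
have fx0_gt0 : 0 < `|f x0| by rewrite normr_gt0.
have [K [cK f_lt_eps]] := C0_lt_outside_compact f_C0 (divr_gt0 fx0_gt0 C1_gt0).
have hits b : stabilizer b -> exists k, K (mul (mul x0 (inv b)) (ys k)).
  (* Otherwise [f x0 = sum_k c_k(b) f (x0 b^-1 ys k)] has norm at most [C * eps]. *)
  case=> st_b _; apply: contrapT => nK.
  suff : `|f x0| <= C * eps.
    have : C * eps < `|f x0| by rewrite mulrA ltr_pdivrMr // mulrDr mulr1 mulrC ltrDl.
    by move=> /[swap] /le_lt_trans /[apply]; rewrite ltxx.
  rewrite -{1}[x0](mulg1 hG) -(mulVg hG b) (mulgA hG) translate_expansion //.
  rewrite mulr_suml; apply: le_trans (ler_norm_sum _ _ _) _; apply: ler_sum => k _.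
  rewrite normrM ler_pM ?normr_ge0 ?norm_coord_le //.
  by apply/ltW/f_lt_eps => Kk; apply: nK; exists k.
apply: (@subclosed_compact _ _ (\big[setU/set0]_(k < d)
    ((fun w => inv (mul (mul (inv x0) w) (inv (ys k)))) @` K))).
- exact: stabilizer_closed.
- apply: bigsetU_compact => k _; apply: continuous_compact => //.
  apply: continuous_subspaceT => w; apply: continuous_comp (continuous_inv hG _).
  apply: (continuous_mulg (b := fun=> inv (ys k)) hG _ (cvg_cst _)).
  exact: continuous_mull hG (inv x0) w.
move=> b /hits [k Kk]; rewrite -bigcup_seq; exists k; first exact: mem_index_enum.
exists (mul (mul x0 (inv b)) (ys k)) => //.
by rewrite (mulgA hG (inv x0)) (mulKg hG) -(mulgA hG) (mulgV hG) (mulg1 hG) (invgK hG).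
Qed.

End TranslationStabilizer.

Section SeparatedTranslates.
Variables (R : realType) (G : topologicalType).
Variables (mul : G -> G -> G) (inv : G -> G) (one : G).
Hypothesis hG : is_topological_group mul inv one.
Variables (n : nat) (f g : G -> Cplx R) (fs gs : 'I_n -> G -> Cplx R).
Hypothesis fg_sep : forall x y, f (mul x y) * g y = \sum_(i < n) fs i x * gs i y.
Variable u0 : G.
Let V := [set y | g (mul u0 y) != 0].

Lemma nonvanishing_open : continuous g -> open V.
Proof.
move=> g_cont; apply: (@open_comp _ _ (g \o mul u0) _ _ (@open_nonzero (Cplx R))) => y _.
exact: continuous_comp (continuous_mull hG u0 y) (g_cont _).
Qed.

Lemma separated_translate x (y : {y | V y}) :
  f (mul x (val y)) = \sum_(i < n)
    fs i (mul x (inv u0)) * (gs i (mul u0 (val y)) / g (mul u0 (val y))).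
Proof.
have := fg_sep (mul x (inv u0)) (mul u0 (val y)).
rewrite -(mulgA hG) (mulKg hG) => /(congr1 (fun z => z / g (mul u0 (val y)))).
by rewrite mulfK ?(valP y) // mulr_suml => ->; apply: eq_bigr => i _; rewrite mulrA.
Qed.

Lemma exists_spanning_translates : exists d (xs ys : 'I_d -> G),
  [/\ (d <= n)%N, minor (fun x y => f (mul x y)) xs ys \in unitmx,
      forall k, V (ys k) & forall y, V y -> in_span mul f ys (fun x => f (mul x y))].
Proof.
pose Phi x (y : {y | V y}) := f (mul x (val y)).
have Phi_rank := minor_unitmx_le_rank (Phi := Phi) separated_translate.
have [d [xs [ys [A_unit A_max]]]] := exists_maximal_unitmx_minor Phi_rank.
exists d, xs, (fun k => val (ys k)); split=> [||k|y Vy]; last 1 first.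
- exists (fun k => \sum_(l < d) invmx (minor Phi xs ys) k l * Phi (xs l) (exist _ y Vy)).
  move=> x.
  rewrite [LHS](maximal_minor_expansion A_unit A_max x (exist _ y Vy)).
  by apply: eq_bigr => k _; rewrite mulrC.
- exact: Phi_rank A_unit.
- exact: A_unit.
- exact: valP (ys k).
Qed.

End SeparatedTranslates.

Definition pad (T : Type) (K : zmodType) d n (u : 'I_d -> T -> K) (j : 'I_n) :
  T -> K :=
  if insub (val j) is Some k then u k else fun=> 0.

Lemma padP (T : Type) (K : zmodType) d n (u : 'I_d -> T -> K) (P : (T -> K) -> Prop)
    (j : 'I_n) :
  P (fun=> 0) -> (forall k, P (u k)) -> P (pad u j).
Proof. by rewrite /pad; case: insub. Qed.

Lemma sum_pad (T U : Type) (K : pzRingType) d n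
    (a : 'I_d -> T -> K) (b : 'I_d -> U -> K) : (d <= n)%N ->
  forall x y, \sum_(k < d) a k x * b k y = \sum_(j < n) pad a j x * pad b j y.
Proof.
move=> d_le_n x y; pose F i := if insub i is Some k then a k x * b k y else 0.
rewrite (eq_bigr (fun k : 'I_d => F k)) => [|k _]; last by rewrite /F valK.
rewrite (big_ord_widen n F d_le_n) big_mkcond; apply: eq_bigr => j _.
rewrite /F /pad; case: insubP => [k ->|/negbTE -> /=]; first by [].
by rewrite mul0r.
Qed.

Theorem corollary1p3 (R : realType) (G : topologicalType)
    (mul : G -> G -> G) (inv : G -> G) (one : G)
    (n : nat) (f g : G -> Cplx R) (fs gs : 'I_n -> G -> Cplx R) :
  is_locally_compact_group mul inv one ->
  C0 f -> C0 g -> (forall i, C0 (fs i)) -> (forall i, C0 (gs i)) ->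
  f <> (fun _ => 0) -> g <> (fun _ => 0) ->
  (forall i, fs i <> (fun _ => 0)) -> (forall i, gs i <> (fun _ => 0)) ->
  (forall x y, f (mul x y) * g y = \sum_(i < n) fs i x * gs i y) ->
  exists H : set G,
    [/\ is_subgroup mul inv one H, compact H, open H &
      exists (f' g' : 'I_n -> G -> Cplx R),
        [/\ (forall j, C0 (f' j)),
            (forall j, {within H, continuous (g' j)}) &
            (forall x y, H y -> f (mul x y) = \sum_(j < n) f' j x * g' j y)]].
Proof.
case=> hG _ _ f_C0 [g_cont _] _ _ f_nz g_nz _ _ fg_sep.
have [x0 fx0] := nonzero_witness f_nz.
have [u0 gu0] := nonzero_witness g_nz.
have [d [xs [ys [d_le_n A_unit V_ys V_span]]]] := exists_spanning_translates hG fg_sep u0.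
have V_open := nonvanishing_open hG u0 g_cont.
have V_one : g (mul u0 one) != 0 by rewrite (mulg1 hG).
exists (stabilizer mul inv f ys); split.
- exact: (stabilizer_subgroup hG A_unit).
- exact: (stabilizer_compact hG A_unit V_open V_ys V_span V_one f_C0 fx0).
- exact: (stabilizer_open hG A_unit V_open V_ys V_span).
exists (pad (fun k x => f (mul x (ys k)))).
exists (pad (fun k y => coord mul f xs ys k (fun x => f (mul x y)))).
split=> [j|j|x y [st_y _]].
- by apply: padP => [|k]; [exact: C0_cst0 | exact: C0_translate hG f_C0].
- apply: continuous_subspaceT; apply: (padP (P := fun h => continuous h)) => [|k].
    exact: cst_continuous.
  exact: (continuous_coord_translate hG f_C0).
- rewrite (translate_expansion hG A_unit V_span V_one st_y) -(sum_pad _ _ d_le_n).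
  by apply: eq_bigr => k _; rewrite mulrC.
Qed.
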